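(* For every $t\in\mathbb Q_{\ge0}\cup\{\infty\}$, the word $\omega_t$ is a reduced word which represents the element $\Omega(t)\in\mathfrak F_3$. (For $t=\frac01,\frac10$ this is the convention $\Omega(\frac01)=\omega_{0/1}=x$, $\Omega(\frac10)=\omega_{1/0}=z$.)
   Context: $\mathfrak F_3$ is the free group on $\{x,y,z\}$. Farey tree $\mathrm{F}\mathbb T$: rooted planar binary tree with root $(\frac01,\frac11,\frac10)$, and each vertex $(\frac ab,\frac cd,\frac ef)$ has left child $(\frac ab,\frac{a+c}{b+d},\frac cd)$ and right child $(\frac cd,\frac{c+e}{d+f},\frac ef)$; $\frac10$ represents $\infty$. Every positive rational $t$ occurs as the middle entry of exactly one vertex. Word tree $\mathrm{W}\mathbb T$: rooted planar binary tree with vertices in $\mathfrak F_3^3$, root $(x,y,z)$, and a vertex $(a,b,c)$ has left child $(a,bcb^{-1},b)$ and right child $(b,b^{-1}ab,c)$. $\Omega(t)$ for positive rational $t$: the middle entry of the vertex of $\mathrm{W}\mathbb T$ at the same position (same sequence of left/right moves from the root) as the unique vertex of $\mathrm{F}\mathbb T$ with middle entry $t$; $\Omega(\frac01)=x$, $\Omega(\frac10)=z$. Modified lattice: the planar graph with vertex set $\mathbb Z^2$ whose edges are the horizontal unit segments, the vertical unit segments, and the diagonal segments of slope $-1$ joining $(i,j+1)$ and $(i+1,j)$. Words $\omega_t$: $\omega_{0/1}=x$, $\omega_{1/0}=z$. For reduced $t=p/q\in(0,\infty)$, let $L_t$ be the segment from $(0,0)$ to $(q,p)$, oriented from $(0,0)$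 to $(q,p)$. List the edges whose relative interior meets $L_t$, in the order of the intersection points along $L_t$. A horizontal (resp. diagonal, vertical) edge contributes $x$ (resp. $y$, $z$) if its midpoint is not on the right-hand side of $L_t$ (including lying on $L_t$), and $x^{-1}$ (resp. $y^{-1}$, $z^{-1}$) if its midpoint is on the right-hand side. $\omega_t$ is the concatenation of these letters. *)

From HB Require Import structures.
From mathcomp Require Import all_boot all_order all_algebra.
Set Implicit Arguments. Unset Strict Implicit. Unset Printing Implicit Defensive.
Import Order.TTheory GRing.Theory Num.Theory.

(* The free group F_3 on {x,y,z}, realised by reduced words.              *)

Inductive gen := gx | gy | gz.

Definition gen_eqb (a b : gen) : bool :=
  match a, b with gx, gx | gy, gy | gz, gz => true | _, _ => false end.
Lemma gen_eqP : Equality.axiom gen_eqb.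
Proof. by case; case; constructor. Qed.
HB.instance Definition _ := hasDecEq.Build gen gen_eqP.

(* a letter: a generator together with an exponent sign (true = +1, false = -1) *)
Definition letter := (gen * bool)%type.
Definition word := seq letter.

Definition inv_letter (l : letter) : letter := (l.1, ~~ l.2).

Fixpoint reduced (w : word) : bool :=
  match w with
  | l1 :: ((l2 :: _) as w') => (l2 != inv_letter l1) && reduced w'
  | _ => true
  end.

Definition push (l : letter) (w : word) : word :=
  match w with
  | l' :: w' => if l' == inv_letter l then w' else l :: w
  | [::] => [:: l]
  end.
Definition freduce (w : word) : word := foldr push [::] w.

Definition fmul (a b : word) : word := freduce (a ++ b).
Definition finv (a : word) : word := rev (map inv_letter a).

Definition X : word := [:: (gx, true)].
Definition Y : word := [:: (gy, true)].
Definition Z : word := [:: (gz, true)].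

(* a fraction a/b is represented by the pair (a, b); (1,0) stands for oo *)
Definition frac := (nat * nat)%type.
Definition ftriple := (frac * frac * frac)%type.

Definition mediant (u v : frac) : frac := (u.1 + v.1, u.2 + v.2).

Definition farey_child (right : bool) (v : ftriple) : ftriple :=
  let: (a, c, e) := v in
  if right then (c, mediant c e, e) else (a, mediant a c, c).

Definition farey_root : ftriple := ((0, 1), (1, 1), (1, 0)).

Definition farey_vertex (path : seq bool) : ftriple :=
  foldl (fun v d => farey_child d v) farey_root path.

Definition wtriple := (word * word * word)%type.

Definition word_child (right : bool) (v : wtriple) : wtriple :=
  let: (a, b, c) := v in
  if right then (b, fmul (finv b) (fmul a b), c)
  else (a, fmul b (fmul c (finv b)), b).

Definition word_root : wtriple := (X, Y, Z).

Definition word_vertex (path : seq bool) : wtriple :=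
  foldl (fun v d => word_child d v) word_root path.

Definition mid3 {T : Type} (v : T * T * T) : T := v.1.2.

(* Omega_rel p q w : "Omega(p/q) = w".  For p/q positive this says that the
   (unique) Farey-tree vertex with middle entry p/q sits at a path where the
   word tree has middle entry w. *)
Definition Omega_rel (p q : nat) (w : word) : Prop :=
  (p = 0%N /\ q = 1%N /\ w = X) \/
  (p = 1%N /\ q = 0%N /\ w = Z) \/
  (0 < p /\ 0 < q /\
   exists path : seq bool,
     let m := mid3 (farey_vertex path) in
     (m.1 * q = m.2 * p)%N /\ w = mid3 (word_vertex path)).

Local Open Scope ring_scope.

Definition pt := (rat * rat)%type.
Definition cross (a b : pt) : rat := a.1 * b.2 - a.2 * b.1.

Inductive ekind := EH | ED | EV.

Definition edge_ends (k : ekind) (i j : int) : pt * pt :=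
  let fi : rat := i%:~R in let fj : rat := j%:~R in
  match k with
  | EH => ((fi, fj), (fi + 1, fj))
  | EV => ((fi, fj), (fi, fj + 1))
  | ED => ((fi, fj + 1), (fi + 1, fj))
  end.

Definition edge_gen (k : ekind) : gen :=
  match k with EH => gx | ED => gy | EV => gz end.

(* If the relative interior of the segment A--B meets L = [(0,0),P], return
   the parameter s in [0,1] of the intersection point s*P along L.
   (For P with both coordinates positive no lattice edge is parallel to L.) *)
Definition cross_param (P : pt) (A B : pt) : option rat :=
  let d := (B.1 - A.1, B.2 - A.2) in
  let den := cross P d in
  if den == 0 then None else
  let s := cross A d / den in
  let u := cross A P / den in
  if [&& 0 < u, u < 1, 0 <= s & s <= 1] then Some s else None.

(* the letter contributed by an edge: positive iff its midpoint is not on the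
   right-hand side of L oriented from (0,0) to P = (q,p) *)
Definition edge_letter (P : pt) (k : ekind) (A B : pt) : letter :=
  let M := ((A.1 + B.1) / 2, (A.2 + B.2) / 2) in
  (edge_gen k, 0 <= cross P M).

(* every edge meeting L has its endpoints in [-1, q+1] x [-1, p+1] *)
Definition shift1 (i : nat) : int := Posz i - 1.
Definition int_range (n : nat) : seq int := map shift1 (iota 0 (n + 3)).

Definition candidate_edges (p q : nat) : seq (ekind * int * int) :=
  flatten [seq [seq (k, i, j) | i <- int_range q, j <- int_range p] | k <- [:: EH; ED; EV]].

Definition crossings (p q : nat) : seq (rat * letter) :=
  let P : pt := ((q%:R : rat), (p%:R : rat)) in
  pmap (fun e : ekind * int * int =>
          let: (k, i, j) := e in
          let: (A, B) := edge_ends k i j in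
          omap (fun s => (s, edge_letter P k A B)) (cross_param P A B))
       (candidate_edges p q).

Definition lattice_word (p q : nat) : word :=
  map snd (sort (fun a b : rat * letter => a.1 <= b.1) (crossings p q)).

Definition omega (p q : nat) : word :=
  if q == 0%N then Z else if p == 0%N then X else lattice_word p q.

(* The segment from (0,0) to (q,p) passes through p + q - 1 unit squares of the
   modified lattice: it crosses the diagonal of each of them and, between two
   consecutive squares, a horizontal or a vertical edge.  So omega_{p/q} alternates
   between y^{+-1} and x^{+-1} or z^{+-1}, hence is reduced, and it is read off this
   staircase.  The endomorphisms (x, y, z) |-> (y, y^-1 x y, z) and
   (x, y, z) |-> (x, y z y^-1, y) send each vertex of the word tree to its right,
   resp. left, child.  Comparing the staircases letter by letter (the y-pairs
   created by the substitution cancel) shows that they send omega_{p/q} to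
   omega_{(p+q)/q}, resp. omega_{p/(p+q)}, which are the middle entries of the
   right and left children in the Farey tree.  Induction along the Euclidean
   algorithm then gives Omega(p/q) = omega_{p/q}. *)

From HB Require Import structures.
From mathcomp Require Import all_boot all_order all_algebra.
From mathcomp Require Import zify ring.
(* Last, so that [fingraph.finv] does not shadow [Defs.finv]. *)
From Pilot Require Import Defs.
Set Implicit Arguments. Unset Strict Implicit. Unset Printing Implicit Defensive.
Import Order.TTheory GRing.Theory Num.Theory.

(** * Free reduction *)

Lemma inv_letterK : involutive inv_letter.
Proof. by case=> g b; rewrite /inv_letter /= negbK. Qed.

Lemma reduced_cons l w :
  reduced (l :: w) = (if w is l' :: _ then l' != inv_letter l else true) && reduced w.
Proof. by case: w. Qed.

Lemma reduced_push l w : reduced w -> reduced (push l w).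
Proof.
case: w => [|l' w] // red_w; rewrite /push.
case: ifP => inv_l'; first by move: red_w; rewrite reduced_cons => /andP[].
by rewrite reduced_cons inv_l' red_w.
Qed.

Lemma reduced_freduce w : reduced (freduce w).
Proof. by elim: w => //= l w IHw; exact: reduced_push. Qed.

Lemma freduce_id w : reduced w -> freduce w = w.
Proof.
elim: w => // l w IHw; rewrite reduced_cons => /andP[l_w red_w].
rewrite /= IHw //; case: w {IHw} l_w red_w => // l' w' l_w _.
by rewrite /= (negbTE l_w).
Qed.

Lemma freduceK w : freduce (freduce w) = freduce w.
Proof. exact/freduce_id/reduced_freduce. Qed.

Lemma push_invK l w : reduced w -> push l (push (inv_letter l) w) = w.
Proof.
case: w => [|l' w] red_w; first by rewrite /= eqxx.
rewrite /= inv_letterK; case: eqP => [E|_]; last by rewrite /= eqxx.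
subst l'; case: w red_w => [|l2 w] //; rewrite reduced_cons => /andP[l2_l _].
by rewrite /= (negbTE l2_l).
Qed.

Lemma freduce_cat a b : freduce (a ++ b) = foldr push (freduce b) a.
Proof. by rewrite /freduce foldr_cat. Qed.

Lemma freduce_cancel a l b : freduce (a ++ l :: inv_letter l :: b) = freduce (a ++ b).
Proof. by rewrite !freduce_cat /= push_invK // reduced_freduce. Qed.

Lemma freduce_catr a b : freduce (a ++ freduce b) = freduce (a ++ b).
Proof. by rewrite !freduce_cat freduceK. Qed.

Lemma freduce_push_cat l w b : reduced w ->
  freduce (push l w ++ b) = push l (freduce (w ++ b)).
Proof.
case: w => [|l' w] //= red_w; case: eqP => [->|_] //=.
by rewrite push_invK // reduced_freduce.
Qed.

Lemma freduce_catl a b : freduce (freduce a ++ b) = freduce (a ++ b).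
Proof.
by elim: a => //= l a IHa; rewrite freduce_push_cat ?reduced_freduce // IHa.
Qed.

Lemma finv_cat a b : finv (a ++ b) = finv b ++ finv a.
Proof. by rewrite /finv map_cat rev_cat. Qed.

Lemma finv_cons l w : finv (l :: w) = rcons (finv w) (inv_letter l).
Proof. by rewrite /finv /= rev_cons. Qed.

Lemma finvK : involutive finv.
Proof.
by move=> w; rewrite /finv map_rev revK -map_comp (eq_map inv_letterK) map_id.
Qed.

Lemma reduced_cat_cons a l b :
  reduced (a ++ l :: b) = reduced (rcons a l) && reduced (l :: b).
Proof.
elim: a => [|l' a IHa]; first by case: b.
rewrite cat_cons rcons_cons reduced_cons [reduced (l' :: rcons a l)]reduced_cons.
by rewrite IHa andbA; case: a {IHa}.
Qed.

Lemma reduced_finv w : reduced w -> reduced (finv w).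
Proof.
elim: w => // l w IHw; rewrite reduced_cons => /andP[l_w red_w].
rewrite finv_cons; case: w l_w red_w IHw => [|l' w] // l_w red_w IHw.
rewrite finv_cons -cats1 -[rcons (finv w) _]cats1 -catA /= reduced_cat_cons.
rewrite -finv_cons (IHw red_w) /= andbT.
by apply: contra l_w => /eqP ->; rewrite !inv_letterK.
Qed.

Lemma freduce_finv w : freduce (finv w) = finv (freduce w).
Proof.
elim: w => // l w IHw.
rewrite finv_cons -cats1 -freduce_catl IHw /=.
have := reduced_freduce w; case: (freduce w) => [|l' r] // red_r /=.
case: eqP => [->|/eqP l'_l].
  rewrite finv_cons -cats1 -catA /= inv_letterK -[finv r ++ _]cats0 -catA.
  rewrite freduce_cancel cats0 freduce_id //; apply: reduced_finv.
  by move: red_r; rewrite reduced_cons => /andP[].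
by rewrite cats1 -finv_cons freduce_id // reduced_finv // reduced_cons red_r andbT.
Qed.

(** * Substitution endomorphisms of the free group *)

Definition letter_subst (img : gen -> word) (l : letter) : word :=
  if l.2 then img l.1 else finv (img l.1).
Definition word_subst img (w : word) : word := flatten (map (letter_subst img) w).
Definition fhom img (w : word) : word := freduce (word_subst img w).

Lemma letter_subst_inv img l : letter_subst img (inv_letter l) = finv (letter_subst img l).
Proof. by case: l => g [] //; rewrite /letter_subst /= finvK. Qed.

Lemma word_subst_cat img a b : word_subst img (a ++ b) = word_subst img a ++ word_subst img b.
Proof. by rewrite /word_subst map_cat flatten_cat. Qed.

Lemma word_subst_finv img w : word_subst img (finv w) = finv (word_subst img w).
Proof.
elim: w => // l w IHw.
rewrite finv_cons -cats1 word_subst_cat IHw -[l :: w]cat1s word_subst_cat finv_cat.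
by rewrite /word_subst /= !cats0 letter_subst_inv.
Qed.

Lemma freduce_cancel_finv a u b : freduce (a ++ u ++ finv u ++ b) = freduce (a ++ b).
Proof.
elim: u a b => [|l u IHu] a b //=.
by rewrite finv_cons -cats1 -!catA /= -cat_rcons IHu -cats1 -catA /= freduce_cancel.
Qed.

Lemma freduce_word_subst img w :
  freduce (word_subst img (freduce w)) = freduce (word_subst img w).
Proof.
elim: w => // l w IHw /=.
have -> : freduce (word_subst img (push l (freduce w))) =
          freduce (word_subst img (l :: freduce w)).
  case: (freduce w) => [|l' r] //=; case: eqP => [->|_] //=.
  rewrite /word_subst /= -/(word_subst img r) letter_subst_inv.
  by rewrite -[letter_subst img l ++ _]cat0s freduce_cancel_finv.
rewrite -[l :: freduce w]cat1s word_subst_cat -freduce_catr IHw freduce_catr.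
by rewrite -word_subst_cat.
Qed.

Lemma fhom_fmul img u v : fhom img (fmul u v) = fmul (fhom img u) (fhom img v).
Proof.
by rewrite /fhom /fmul freduce_word_subst word_subst_cat freduce_catl freduce_catr.
Qed.

Lemma fhom_finv img u : fhom img (finv u) = finv (fhom img u).
Proof. by rewrite /fhom word_subst_finv freduce_finv. Qed.

(** * The Farey tree and the word tree *)

Definition map3 {T : Type} (h : T -> T) (t : T * T * T) : T * T * T :=
  let: (a, b, c) := t in (h a, h b, h c).

Lemma mid3_map3 {T : Type} (h : T -> T) t : mid3 (map3 h t) = h (mid3 t).
Proof. by case: t => [[a b] c]. Qed.

Lemma word_child_fhom img d t :
  word_child d (map3 (fhom img) t) = map3 (fhom img) (word_child d t).
Proof. by case: t => [[a b] c]; case: d; rewrite /= !fhom_fmul !fhom_finv. Qed.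

Lemma foldl_word_child_fhom img t path :
  foldl (fun v d => word_child d v) (map3 (fhom img) t) path =
  map3 (fhom img) (foldl (fun v d => word_child d v) t path).
Proof. by elim: path t => //= d path IHpath t; rewrite word_child_fhom IHpath. Qed.

(* [word_child true word_root] and [word_child false word_root] are the images
   of [word_root] under these substitutions. *)
Definition right_img (g : gen) : word :=
  match g with gx => Y | gy => [:: (gy, false); (gx, true); (gy, true)] | gz => Z end.
Definition left_img (g : gen) : word :=
  match g with gx => X | gy => [:: (gy, true); (gz, true); (gy, false)] | gz => Y end.

Lemma word_vertexR path :
  word_vertex (true :: path) = map3 (fhom right_img) (word_vertex path).
Proof. by rewrite -foldl_word_child_fhom. Qed.

Lemma word_vertexL path :
  word_vertex (false :: path) = map3 (fhom left_img) (word_vertex path).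
Proof. by rewrite -foldl_word_child_fhom. Qed.

Definition farey_right (u : frac) : frac := (u.1 + u.2, u.2)%N.
Definition farey_left (u : frac) : frac := (u.1, u.1 + u.2)%N.

Lemma foldl_farey_child_map3 f t path :
  (forall u v, mediant (f u) (f v) = f (mediant u v)) ->
  foldl (fun v d => farey_child d v) (map3 f t) path =
  map3 f (foldl (fun v d => farey_child d v) t path).
Proof.
move=> f_mediant; elim: path t => //= d path IHpath t; rewrite -IHpath.
by case: t => [[a b] c]; case: d; rewrite /= f_mediant.
Qed.

Lemma farey_vertexR path :
  farey_vertex (true :: path) = map3 farey_right (farey_vertex path).
Proof.
rewrite -foldl_farey_child_map3 // => -[a1 a2] [b1 b2].
by rewrite /mediant /farey_right /=; congr pair; lia.
Qed.

Lemma farey_vertexL path :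
  farey_vertex (false :: path) = map3 farey_left (farey_vertex path).
Proof.
rewrite -foldl_farey_child_map3 // => -[a1 a2] [b1 b2].
by rewrite /mediant /farey_left /=; congr pair; lia.
Qed.

(** * The staircase of edges crossed by the segment *)

Definition ekind_eqb (a b : ekind) : bool :=
  match a, b with EH, EH | ED, ED | EV, EV => true | _, _ => false end.
Lemma ekind_eqP : Equality.axiom ekind_eqb.
Proof. by case; case; constructor. Qed.
HB.instance Definition _ := hasDecEq.Build ekind ekind_eqP.

Definition nedge := (ekind * nat * nat)%type.

(* The line through (0,0) and (q,p) meets [x + y = i + j + 1] at abscissa
   [(i + j + 1) q / (p + q)], which must lie strictly between [i] and [i + 1]. *)
Definition meets_diag (p q i j : nat) : bool :=
  (i * p < j.+1 * q) && (j.+1 * q < i * p + p + q).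

(* The edges crossed from the unit square with lower left corner (i,j) on, through
   [n] more squares: in each square the segment crosses the diagonal, then leaves
   through the top edge if it passes above (i+1,j+1), through the right edge
   otherwise. *)
Fixpoint staircase (p q n i j : nat) : seq nedge :=
  (ED, i, j) :: match n with
   | 0 => [::]
   | n'.+1 => if j.+1 * q < i.+1 * p then (EH, i, j.+1) :: staircase p q n' i j.+1
              else (EV, i.+1, j) :: staircase p q n' i.+1 j
   end.

(* [0 <= cross (q,p) M] for the midpoint [M] of the edge, cleared of the
   denominator 2. *)
Definition edge_sign (p q : nat) (e : nedge) : bool :=
  let: (k, i, j) := e in
  match k with
  | EH => p * (2 * i + 1) <= q * (2 * j)
  | EV => p * (2 * i) <= q * (2 * j + 1)
  | ED => p * (2 * i + 1) <= q * (2 * j + 1)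
  end.

Definition nedge_letter p q (e : nedge) : letter := (edge_gen e.1.1, edge_sign p q e).

Definition stair_word p q : word := map (nedge_letter p q) (staircase p q (p + q - 2) 0 0).

Lemma staircase_head p q n i j :
  staircase p q n i j = (ED, i, j) :: behead (staircase p q n i j).
Proof. by case: n. Qed.

Lemma staircaseS p q n i j : staircase p q n.+1 i j = (ED, i, j) ::
  (if j.+1 * q < i.+1 * p then (EH, i, j.+1) :: staircase p q n i j.+1
   else (EV, i.+1, j) :: staircase p q n i.+1 j).
Proof. by []. Qed.

Lemma coprime_mul_eq p q a b : coprime p q -> 0 < a -> a * p = b * q -> q <= a.
Proof.
move=> co_pq a_gt0 ap_bq; apply: dvdn_leq => //.
by rewrite -(@Gauss_dvdl _ _ p) 1?coprime_sym // ap_bq dvdn_mull.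
Qed.

(* The open segment meets the relative interior of the edge. *)
Definition crossed (p q : nat) (e : nedge) : bool :=
  let: (k, i, j) := e in
  match k with
  | ED => meets_diag p q i j && (i + j + 2 <= p + q)
  | EH => [&& i * p < j * q, j * q < i * p + p, 0 < j & j < p]
  | EV => [&& j * q < i * p, i * p < j * q + q, 0 < i & i < q]
  end.

Lemma meets_diag_uniq p q i j i' j' :
  meets_diag p q i j -> meets_diag p q i' j' -> i + j = i' + j' -> i = i'.
Proof. by move=> /andP[? ?] /andP[? ?] ?; nia. Qed.

Lemma meets_diag_up p q i j :
  meets_diag p q i j -> j.+1 * q < i.+1 * p -> meets_diag p q i j.+1.
Proof. by move=> /andP[? ?] ?; apply/andP; split; lia. Qed.

Lemma meets_diag00 p q : 0 < p -> 0 < q -> meets_diag p q 0 0.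
Proof. by move=> ? ?; apply/andP; split; lia. Qed.

Section Staircase.
Variables p q : nat.
Hypotheses (p_gt0 : 0 < p) (q_gt0 : 0 < q) (co_pq : coprime p q).

(* Coprimality excludes that the segment passes through the corner (i+1,j+1). *)
Lemma meets_diag_right i j : meets_diag p q i j -> ~~ (j.+1 * q < i.+1 * p) ->
  i + j + 2 < p + q -> meets_diag p q i.+1 j /\ i.+1 < q.
Proof.
move=> /andP[? ?] ? ?; have i1_lt_q : i.+1 < q by nia.
have : i.+1 * p != j.+1 * q.
  by apply/eqP => /(coprime_mul_eq co_pq) => /(_ isT); lia.
by split => //; apply/andP; split; lia.
Qed.

Lemma crossed_staircase n i j (e : nedge) : meets_diag p q i j -> n + i + j + 2 = p + q ->
  e \in staircase p q n i j -> crossed p q e.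
Proof.
elim: n i j => [|n IHn] i j dij sum_ij.
  by rewrite inE => /eqP -> /=; rewrite dij; lia.
rewrite staircaseS inE => /orP[/eqP -> /=|]; first by rewrite dij; lia.
case: ifP => up; rewrite inE => /orP[/eqP ->|].
- by move: dij => /andP[? ?] /=; nia.
- by apply: IHn; [exact: meets_diag_up | lia].
- have [/andP[? ?] ?] := meets_diag_right dij (negbT up) ltac:(lia).
  by move: dij => /andP[? ?] /=; lia.
- have [dij' _] := meets_diag_right dij (negbT up) ltac:(lia).
  by apply: IHn => //; lia.
Qed.

Lemma staircase_subset n i0 j0 i j :
  meets_diag p q i0 j0 -> n + i0 + j0 + 2 = p + q ->
  meets_diag p q i j -> i0 + j0 <= i + j -> i + j + 2 <= p + q ->
  {subset staircase p q (p + q - 2 - (i + j)) i j <= staircase p q n i0 j0}.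
Proof.
elim: n i0 j0 => [|n IHn] i0 j0 d0 sum0 dij le_ij le_pq.
  have i0_eq := meets_diag_uniq d0 dij ltac:(lia).
  have j0_eq : j0 = j by lia.
  by rewrite i0_eq j0_eq (_ : p + q - 2 - (i + j) = 0) //; lia.
have [lt_ij|eq_ij] : i0 + j0 < i + j \/ i0 + j0 = i + j by lia.
  move=> e e_in; rewrite staircaseS !inE.
  case: ifP => up; apply/or3P; constructor 3.
    by apply: (IHn _ _ (meets_diag_up d0 up)) => //; lia.
  have [d0' _] := meets_diag_right d0 (negbT up) ltac:(lia).
  by apply: (IHn _ _ d0') => //; lia.
have i0_eq := meets_diag_uniq d0 dij eq_ij.
have j0_eq : j0 = j by lia.
by rewrite i0_eq j0_eq (_ : p + q - 2 - (i + j) = n.+1) //; lia.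
Qed.

Lemma mem_staircase e : crossed p q e -> e \in staircase p q (p + q - 2) 0 0.
Proof.
have in_from i j : meets_diag p q i j -> i + j + 2 <= p + q ->
    {subset staircase p q (p + q - 2 - (i + j)) i j <= staircase p q (p + q - 2) 0 0}.
  by move=> dij ?; apply: staircase_subset => //; [exact: (meets_diag00 p_gt0 q_gt0) | lia].
case: e => [[[] i j]] /=.
- move=> /and4P[? ? ? ?]; have [j' ej] : exists j', j = j'.+1 by exists j.-1; lia.
  subst j.
  have dij : meets_diag p q i j' by apply/andP; split; nia.
  have i_lt_q : i < q by rewrite -(ltn_pmul2r p_gt0); nia.
  apply: (in_from i j' dij); first by lia.
  rewrite (_ : p + q - 2 - (i + j') = (p + q - 3 - (i + j')).+1); last by lia.
  by rewrite staircaseS ifT ?inE ?eqxx ?orbT //; lia.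
- by move=> /andP[dij ?]; apply: (in_from i j dij) => //; rewrite staircase_head mem_head.
- move=> /and4P[? ? ? ?]; have [i' ei] : exists i', i = i'.+1 by exists i.-1; lia.
  subst i.
  have dij : meets_diag p q i' j by apply/andP; split; nia.
  have j_lt_p : j < p by rewrite -(ltn_pmul2r q_gt0); nia.
  apply: (in_from i' j dij); first by lia.
  rewrite (_ : p + q - 2 - (i' + j) = (p + q - 3 - (i' + j)).+1); last by lia.
  by rewrite staircaseS ifF ?inE ?eqxx ?orbT //; apply/negbTE; lia.
Qed.
End Staircase.

(** * The staircase word under the substitutions *)

Definition yP : letter := (gy, true).
Definition yN : letter := (gy, false).

Fixpoint y_alternating (w : word) : bool :=
  match w with
  | [::] => true
  | c :: d :: r => [&& c.1 != gy, d.1 == gy & y_alternating r]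
  | _ => false
  end.

Lemma y_alternating_ind (P : word -> Prop) : P [::] ->
  (forall c d r, c.1 != gy -> d.1 == gy -> P r -> P (c :: d :: r)) ->
  forall t, y_alternating t -> P t.
Proof.
move=> P0 Pcons t; have [n] := ubnP (size t).
elim: n t => // n IHn [|c [|d r]] //= /ltnSE size_r /and3P[c_y d_y alt_r].
by apply: Pcons => //; apply: IHn => //; lia.
Qed.

Lemma reduced_y_alternating s t : y_alternating t -> reduced ((gy, s) :: t).
Proof.
move=> alt_t; elim/y_alternating_ind: t / alt_t s => [|c d r c_y d_y IHr] s //.
rewrite reduced_cons [reduced (c :: _)]reduced_cons.
move: d_y IHr; case: d => g b /= /eqP -> -> /=.
by case: c c_y => -[] e.
Qed.

Lemma y_alternating_staircase p q n i j :
  y_alternating (map (nedge_letter p q) (behead (staircase p q n i j))).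
Proof.
elim: n i j => [|n IHn] i j //=.
by case: ifP => _; rewrite staircase_head /= IHn.
Qed.

Lemma reduced_stair_word p q : reduced (stair_word p q).
Proof.
rewrite /stair_word staircase_head.
exact/reduced_y_alternating/y_alternating_staircase.
Qed.

(* For [t] alternating between x/z-letters and y-letters, [right_img_tail t] and
   [left_img_tail t] are the reduced forms of [yP :: word_subst right_img t] and
   [yN :: word_subst left_img t]. *)
Fixpoint right_img_tail (t : word) : word :=
  match t with
  | c :: d :: r =>
      (if c.1 is gz then [:: yP; c; yN] else [:: (gy, c.2)]) ++ (gx, d.2) :: right_img_tail r
  | _ => [:: yP]
  end.
Fixpoint left_img_tail (t : word) : word :=
  match t with
  | c :: d :: r =>
      (if c.1 is gx then [:: yN; c; yP] else [:: (gy, c.2)]) ++ (gz, d.2) :: left_img_tail r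
  | _ => [:: yN]
  end.
Lemma freduce_right_img a t : y_alternating t ->
  freduce (a ++ yP :: word_subst right_img t) = freduce (a ++ right_img_tail t).
Proof.
move=> alt_t; elim/y_alternating_ind: t / alt_t a => [|c d r c_y d_y IHr] a //.
case: d d_y => g s /= /eqP ->; case: c c_y => -[] e // _.
- have -> : yP :: word_subst right_img [:: (gx, e), (gy, s) & r] =
     [:: yP; (gy, e); yN; (gx, s)] ++ yP :: word_subst right_img r by case: e; case: s.
  rewrite catA IHr -catA; case: e => /=.
  + by rewrite -cat_rcons (freduce_cancel _ yP) cat_rcons.
  + by rewrite (freduce_cancel _ yP).
- have -> : yP :: word_subst right_img [:: (gz, e), (gy, s) & r] =
     [:: yP; (gz, e); yN; (gx, s)] ++ yP :: word_subst right_img r by case: e; case: s.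
  by rewrite catA IHr -catA.
Qed.

Lemma freduce_left_img a t : y_alternating t ->
  freduce (a ++ yN :: word_subst left_img t) = freduce (a ++ left_img_tail t).
Proof.
move=> alt_t; elim/y_alternating_ind: t / alt_t a => [|c d r c_y d_y IHr] a //.
case: d d_y => g s /= /eqP ->; case: c c_y => -[] e // _.
- have -> : yN :: word_subst left_img [:: (gx, e), (gy, s) & r] =
     [:: yN; (gx, e); yP; (gz, s)] ++ yN :: word_subst left_img r by case: e; case: s.
  by rewrite catA IHr -catA.
- have -> : yN :: word_subst left_img [:: (gz, e), (gy, s) & r] =
     [:: yN; (gy, e); yP; (gz, s)] ++ yN :: word_subst left_img r by case: e; case: s.
  rewrite catA IHr -catA; case: e => /=.
  + by rewrite (freduce_cancel _ yN).
  + by rewrite -cat_rcons (freduce_cancel _ yN) cat_rcons.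
Qed.

Section StairWordImages.
Variables p q : nat.
Hypotheses (p_gt0 : 0 < p) (q_gt0 : 0 < q) (co_pq : coprime p q).

Lemma staircase_right n i j : meets_diag p q i j -> n + i + j + 2 = p + q ->
  map (nedge_letter (p + q) q) (staircase (p + q) q (n + (q - 1 - i)) i (i + j + 1)) =
  right_img_tail (map (nedge_letter p q) (behead (staircase p q n i j))).
Proof.
elim: n i j => [|n IHn] i j dij sum_ij; move: (dij) => /andP[lo hi].
  have ei : i = q - 1 by nia.
  have ej : j = p - 1 by lia.
  subst i j; rewrite subnn /= /nedge_letter /=; congr [:: (_, _)]; apply/idP; nia.
rewrite [staircase p q n.+1 i j]staircaseS addSn.
case: ifP => up.
  rewrite staircaseS ifT; last by lia.
  rewrite (_ : (i + j + 1).+1 = i + j.+1 + 1); last by lia.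
  rewrite !map_cons (IHn _ _ (meets_diag_up dij up)); last by lia.
  rewrite (staircase_head p q n i j.+1) /= /nedge_letter /=.
  by congr (_ :: _ :: _); congr (_, _); apply/idP/idP; lia.
have [dij' i1_lt_q] := meets_diag_right p_gt0 q_gt0 co_pq dij (negbT up) ltac:(lia).
move: (dij') => /andP[lo' hi'].
rewrite (_ : (n + (q - 1 - i)).+1 = (n + (q - 1 - i.+1)).+2); last by lia.
rewrite staircaseS ifF; last by apply/negbTE; lia.
rewrite staircaseS ifT; last by lia.
rewrite (_ : (i + j + 1).+1 = i.+1 + j + 1); last by lia.
rewrite !map_cons (IHn _ _ dij'); last by lia.
rewrite (staircase_head p q n i.+1 j) /= /nedge_letter /=.
congr [:: (_, _), (_, _), (_, _), (_, _) & _].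
- by apply/idP; lia.
- by apply/idP/idP; lia.
- by apply/negbTE; lia.
- by apply/idP/idP; lia.
Qed.

Lemma staircase_left n i j : meets_diag p q i j -> n + i + j + 2 = p + q ->
  map (nedge_letter p (p + q)) (staircase p (p + q) (n + (p - 1 - j)) (i + j + 1) j) =
  left_img_tail (map (nedge_letter p q) (behead (staircase p q n i j))).
Proof.
elim: n i j => [|n IHn] i j dij sum_ij; move: (dij) => /andP[lo hi].
  have ei : i = q - 1 by nia.
  have ej : j = p - 1 by lia.
  subst i j; rewrite subnn /= /nedge_letter /=; congr [:: (_, _)]; apply/negbTE; nia.
rewrite [staircase p q n.+1 i j]staircaseS addSn.
case: ifP => up.
  have j1_lt_p : j.+1 < p by nia.
  rewrite (_ : (n + (p - 1 - j)).+1 = (n + (p - 1 - j.+1)).+2); last by lia.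
  rewrite staircaseS ifT; last by lia.
  rewrite staircaseS ifF; last by apply/negbTE; lia.
  rewrite (_ : (i + j + 1).+1 = i + j.+1 + 1); last by lia.
  rewrite !map_cons (IHn _ _ (meets_diag_up dij up)); last by lia.
  rewrite (staircase_head p q n i j.+1) /= /nedge_letter /=.
  congr [:: (_, _), (_, _), (_, _), (_, _) & _].
  - by apply/negbTE; lia.
  - by apply/idP/idP; lia.
  - by apply/idP; lia.
  - by apply/idP/idP; lia.
have [dij' _] := meets_diag_right p_gt0 q_gt0 co_pq dij (negbT up) ltac:(lia).
move: (dij') => /andP[lo' hi'].
rewrite staircaseS ifF; last by apply/negbTE; lia.
rewrite (_ : (i + j + 1).+1 = i.+1 + j + 1); last by lia.
rewrite !map_cons (IHn _ _ dij'); last by lia.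
rewrite (staircase_head p q n i.+1 j) /= /nedge_letter /=.
by congr [:: (_, _), (_, _) & _]; apply/idP/idP; lia.
Qed.

Lemma fhom_right_stair_word : fhom right_img (stair_word p q) = stair_word (p + q) q.
Proof.
have := staircase_right (meets_diag00 p_gt0 q_gt0) (_ : p + q - 2 + 0 + 0 + 2 = p + q).
rewrite addn0 subn0 => /(_ ltac:(lia)) tail.
rewrite -(freduce_id (reduced_stair_word (p + q) q)) /stair_word /fhom.
rewrite (_ : p + q + q - 2 = (p + q - 2 + (q - 1)).+1); last by lia.
rewrite staircaseS ifT; last by lia.
rewrite staircase_head map_cons; set T := map (nedge_letter p q) _.
have -> : word_subst right_img (nedge_letter p q (ED, 0, 0) :: T) =
   [:: yN; (gx, edge_sign p q (ED, 0, 0))] ++ yP :: word_subst right_img T.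
  by rewrite /word_subst /= /letter_subst /=; case: (_ <= _).
rewrite freduce_right_img ?y_alternating_staircase // -tail /=.
by rewrite /nedge_letter /=; congr (freduce [:: (_, _), (_, _) & _]); apply/idP/idP; lia.
Qed.

Lemma fhom_left_stair_word : fhom left_img (stair_word p q) = stair_word p (p + q).
Proof.
have := staircase_left (meets_diag00 p_gt0 q_gt0) (_ : p + q - 2 + 0 + 0 + 2 = p + q).
rewrite addn0 subn0 => /(_ ltac:(lia)) tail.
rewrite -(freduce_id (reduced_stair_word p (p + q))) /stair_word /fhom.
rewrite (_ : p + (p + q) - 2 = (p + q - 2 + (p - 1)).+1); last by lia.
rewrite staircaseS ifF; last by apply/negbTE; lia.
rewrite staircase_head map_cons; set T := map (nedge_letter p q) _.
have -> : word_subst left_img (nedge_letter p q (ED, 0, 0) :: T) =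
   [:: yP; (gz, edge_sign p q (ED, 0, 0))] ++ yN :: word_subst left_img T.
  by rewrite /word_subst /= /letter_subst /=; case: (_ <= _).
rewrite freduce_left_img ?y_alternating_staircase // -tail /=.
by rewrite /nedge_letter /=; congr (freduce [:: (_, _), (_, _) & _]); apply/idP/idP; lia.
Qed.
End StairWordImages.

Section SortByKey.
Local Open Scope order_scope.
Context {d : Order.disp_t} {R : orderType d} {T : eqType}.

Lemma lt_sorted_key_inj (U : eqType) (key : U -> R) s :
  sorted (fun a b => key a < key b) s -> {in s &, injective key}.
Proof.
rewrite sorted_pairwise => [|b a c]; last exact: lt_trans.
elim: s => // a s IHs; rewrite pairwise_cons => /andP[/allP a_lt s_lt] x y.
rewrite !inE => /predU1P[->|x_s] /predU1P[->|y_s] // key_eq.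
- by have := a_lt y y_s; rewrite /= key_eq ltxx.
- by have := a_lt x x_s; rewrite /= key_eq ltxx.
- exact: IHs.
Qed.

Lemma sort_le_fst_perm (s t : seq (R * T)) :
  perm_eq s t -> sorted (fun a b => a.1 < b.1) t -> sort (fun a b => a.1 <= b.1) s = t.
Proof.
move=> s_t t_lt; have key_inj := lt_sorted_key_inj t_lt.
have t_le : sorted (fun a b => a.1 <= b.1) t by apply: sub_sorted t_lt => a b /ltW.
rewrite -[RHS](sorted_sort _ t_le) => [|b a c]; last exact: le_trans.
apply/perm_sort_inP => // [a b _ _|b a c _ _ _|a b a_s b_s].
- exact: le_total.
- exact: le_trans.
- by move/le_anti; apply: key_inj; rewrite -(perm_mem s_t).
Qed.
End SortByKey.

(** * The lattice word is the staircase word *)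

Lemma pmap_uniq_in (aT rT : eqType) (f : aT -> option rT) s : uniq s ->
  {in s &, forall x y r, f x = Some r -> f y = Some r -> x = y} -> uniq (pmap f s).
Proof.
elim: s => //= x s IHs /andP[x_s s_uniq] f_inj.
have f_inj' : {in s &, forall x y r, f x = Some r -> f y = Some r -> x = y}.
  by move=> a b a_s b_s; apply: f_inj; rewrite inE ?a_s ?b_s orbT.
case fx: (f x) => [r|] /=; last exact: IHs.
rewrite IHs // andbT mem_pmap; apply/mapP => -[y y_s fy].
have y_xs : y \in x :: s by rewrite inE y_s orbT.
have xy : x = y := f_inj x y (mem_head x s) y_xs r fx (esym fy).
by move: x_s; rewrite xy y_s.
Qed.

Lemma mem_int_range (n i : nat) : i <= n + 1 -> Posz i \in int_range n.
Proof.
by move=> i_le; apply/mapP; exists i.+1; [rewrite mem_iota; lia | rewrite /shift1; lia].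
Qed.

Lemma uniq_int_range n : uniq (int_range n).
Proof. by rewrite /int_range map_inj_uniq ?iota_uniq // => a b; rewrite /shift1; lia. Qed.

Lemma uniq_candidate_edges p q : uniq (candidate_edges p q).
Proof.
have block_uniq (k : ekind) : uniq [seq (k, i, j) | i <- int_range q, j <- int_range p].
  by apply: allpairs_uniq; rewrite ?uniq_int_range // => -[? ?] [? ?] _ _ [-> ->].
have block_kind (k : ekind) (e : ekind * int * int) :
    e \in [seq (k, i, j) | i <- int_range q, j <- int_range p] -> e.1.1 = k.
  by case/allpairsP => -[? ?] [_ _ ->].
rewrite /candidate_edges /= cats0 !cat_uniq !block_uniq /= !andbT.
apply/andP; split; apply/hasPn => e e_in; apply/negP => /block_kind e_k.
  by move: e_in; rewrite mem_cat => /orP[] /block_kind; rewrite e_k.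
by move: e_in => /block_kind; rewrite e_k.
Qed.

Section LatticeWord.
Local Open Scope ring_scope.

Definition crossing (p q : nat) (e : ekind * int * int) : option (rat * letter) :=
  let: (k, i, j) := e in
  let: (A, B) := edge_ends k i j in
  omap (fun s => (s, edge_letter (q%:R, p%:R) k A B)) (cross_param (q%:R, p%:R) A B).

Lemma crossingsE p q : crossings p q = pmap (crossing p q) (candidate_edges p q).
Proof. by []. Qed.

Lemma cross_paramE (P A B : pt) (n : nat) (a b : int) : (0 < n)%N ->
  let d := (B.1 - A.1, B.2 - A.2) in
  cross P d != 0 -> cross A P / cross P d = a%:~R / n%:R ->
  cross A d / cross P d = b%:~R / n%:R ->
  cross_param P A B = if [&& 0 < a, a < n, 0 <= b & b <= n] then Some (b%:~R / n%:R) else None.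
Proof.
move=> n_gt0 d d_neq0 uE sE; rewrite /cross_param -/d (negbTE d_neq0) uE sE.
have n_gt0' : (0 : rat) < n%:R by rewrite ltr0n.
rewrite !(ltr_pdivlMr, ltr_pdivrMr, ler_pdivlMr, ler_pdivrMr) // !(mul0r, mul1r).
by rewrite -[n%:R]/((n%:Z)%:~R : rat) !(ltr0z, ler0z, ltr_int, ler_int).
Qed.

Lemma edge_letterE (P A B : pt) k (c : int) :
  c%:~R = 2 * cross P ((A.1 + B.1) / 2, (A.2 + B.2) / 2) ->
  edge_letter P k A B = (edge_gen k, 0 <= c).
Proof.
by move=> cE; rewrite /edge_letter -(ler0z rat) cE pmulr_rge0.
Qed.

Lemma crossingH p q (i j : int) : (0 < p)%N ->
  crossing p q (EH, i, j) =
  if [&& 0 < j * q%:Z - i * p%:Z, j * q%:Z - i * p%:Z < p%:Z, 0 <= j & j <= p%:Z]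
  then Some (j%:~R / p%:R, (gx, 0 <= 2 * j * q%:Z - p%:Z * (2 * i + 1))) else None.
Proof.
move=> p_gt0; have p_neq0 : (p%:R : rat) != 0 by rewrite pnatr_eq0 -lt0n.
have den : q%:R * (j%:~R - j%:~R) - p%:R * (i%:~R + 1 - i%:~R) = - p%:R :> rat by ring.
rewrite /crossing /= (@cross_paramE _ _ _ p (j * q%:Z - i * p%:Z) j p_gt0);
  rewrite /cross /= ?den ?oppr_eq0 //; last 2 first.
- by rewrite rmorphB !rmorphM /=; field.
- by field.
case: ifP => //= _.
rewrite (@edge_letterE _ _ _ _ (2 * j * q%:Z - p%:Z * (2 * i + 1))) //.
by rewrite /cross /= !(rmorphB, rmorphD, rmorphM, rmorph1) /=; field.
Qed.

Lemma crossingV p q (i j : int) : (0 < q)%N ->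
  crossing p q (EV, i, j) =
  if [&& 0 < i * p%:Z - j * q%:Z, i * p%:Z - j * q%:Z < q%:Z, 0 <= i & i <= q%:Z]
  then Some (i%:~R / q%:R, (gz, 0 <= q%:Z * (2 * j + 1) - 2 * i * p%:Z)) else None.
Proof.
move=> q_gt0; have q_neq0 : (q%:R : rat) != 0 by rewrite pnatr_eq0 -lt0n.
have den : q%:R * (j%:~R + 1 - j%:~R) - p%:R * (i%:~R - i%:~R) = q%:R :> rat by ring.
rewrite /crossing /= (@cross_paramE _ _ _ q (i * p%:Z - j * q%:Z) i q_gt0);
  rewrite /cross /= ?den //; last 2 first.
- by rewrite rmorphB !rmorphM /=; field.
- by field.
case: ifP => //= _.
rewrite (@edge_letterE _ _ _ _ (q%:Z * (2 * j + 1) - 2 * i * p%:Z)) //.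
by rewrite /cross /= !(rmorphB, rmorphD, rmorphM, rmorph1) /=; field.
Qed.

Lemma crossingD p q (i j : int) : (0 < p + q)%N ->
  crossing p q (ED, i, j) =
  if [&& 0 < (j + 1) * q%:Z - i * p%:Z, (j + 1) * q%:Z - i * p%:Z < (p + q)%:Z,
         0 <= i + j + 1 & i + j + 1 <= (p + q)%:Z]
  then Some ((i + j + 1)%:~R / (p + q)%:R,
             (gy, 0 <= q%:Z * (2 * j + 1) - p%:Z * (2 * i + 1)))
  else None.
Proof.
move=> n_gt0; have n_neq0 : ((p + q)%:R : rat) != 0 by rewrite pnatr_eq0 -lt0n.
have den : q%:R * (j%:~R - (j%:~R + 1)) - p%:R * (i%:~R + 1 - i%:~R) = - (p + q)%:R :> rat.
  by rewrite natrD; ring.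
rewrite /crossing /= (@cross_paramE _ _ _ (p + q) ((j + 1) * q%:Z - i * p%:Z) (i + j + 1) n_gt0);
  rewrite /cross /= ?den ?oppr_eq0 //; last 2 first.
- by rewrite !(rmorphB, rmorphD, rmorphM, rmorph1) /=; field; rewrite -natrD.
- by rewrite !(rmorphD, rmorph1) /=; field; rewrite -natrD.
case: ifP => //= _.
rewrite (@edge_letterE _ _ _ _ (q%:Z * (2 * j + 1) - p%:Z * (2 * i + 1))) //.
by rewrite /cross /= !(rmorphB, rmorphD, rmorphM, rmorph1) /=; field.
Qed.

Lemma ltr_nat_ratio (R : numFieldType) (a b c d : nat) : (0 < b)%N -> (0 < d)%N ->
  (a%:R / b%:R < c%:R / d%:R :> R) = (a * d < c * b)%N.
Proof.
move=> b_gt0 d_gt0.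
by rewrite ltr_pdivrMr ?ltr0n // mulrAC ltr_pdivlMr ?ltr0n // -!natrM ltr_nat.
Qed.
End LatticeWord.

Section LatticeStaircase.
Local Open Scope ring_scope.
Variables p q : nat.
Hypotheses (p_gt0 : (0 < p)%N) (q_gt0 : (0 < q)%N) (co_pq : coprime p q).

Definition int_edge (e : nedge) : ekind * int * int := (e.1.1, Posz e.1.2, Posz e.2).

(* The parameter along [L] at which the segment crosses the edge. *)
Definition crossing_time (e : nedge) : rat :=
  let: (k, i, j) := e in
  match k with
  | ED => (i + j + 1)%:R / (p + q)%:R
  | EH => j%:R / p%:R
  | EV => i%:R / q%:R
  end.

Lemma sorted_staircase n i j : meets_diag p q i j -> (n + i + j + 2 = p + q)%N ->
  sorted (fun a b => crossing_time a < crossing_time b) (staircase p q n i j).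
Proof.
elim: n i j => [|n IHn] i j dij sum_ij //.
rewrite staircaseS; case: ifP => up.
  have := IHn i j.+1 (meets_diag_up dij up) ltac:(lia).
  rewrite (staircase_head p q n i j.+1) /= => ->; move: dij => /andP[? ?].
  by rewrite andbT !ltr_nat_ratio //; lia.
have [dij' _] := meets_diag_right p_gt0 q_gt0 co_pq dij (negbT up) ltac:(lia).
have := IHn i.+1 j dij' ltac:(lia).
rewrite (staircase_head p q n i.+1 j) /= => ->; move: dij dij' => /andP[? ?] /andP[? ?].
by rewrite andbT !ltr_nat_ratio //; lia.
Qed.

Lemma crossing_int_edge e : crossed p q e ->
  crossing p q (int_edge e) = Some (crossing_time e, nedge_letter p q e).
Proof.
case: e => [[[] i j]].
- move=> /and4P[? ? ? ?]; rewrite crossingH //= ifT; last by lia.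
  by congr (Some (_, (_, _))); rewrite /edge_sign /=; apply/idP/idP; lia.
- move=> /andP[/andP[? ?] ?]; rewrite crossingD /=; last by lia.
  rewrite ifT; last by lia.
  by congr (Some (_, (_, _))); rewrite /edge_sign /=; apply/idP/idP; lia.
- move=> /and4P[? ? ? ?]; rewrite crossingV //= ifT; last by lia.
  by congr (Some (_, (_, _))); rewrite /edge_sign /=; apply/idP/idP; lia.
Qed.

Lemma crossing_Some_ge0 k (i j : int) r :
  crossing p q (k, i, j) = Some r -> 0 <= i /\ 0 <= j.
Proof.
case: k; [rewrite crossingH // | rewrite crossingD; last by lia | rewrite crossingV //];
  by case: ifP => // /and4P[? ? ? ?] _; split; nia.
Qed.

Lemma crossing_Some_crossed e r : crossing p q (int_edge e) = Some r -> crossed p q e.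
Proof.
case: e => [[[] i j]].
- rewrite crossingH //=; case: ifP => // cond _.
  suff : j != p by lia.
  apply/eqP => ej; subst j.
  have i_lt_q : (i < q)%N by rewrite -(ltn_pmul2r p_gt0); lia.
  have : (i.+1 * p <= q * p)%N by rewrite leq_pmul2r.
  lia.
- rewrite crossingD /=; last by lia.
  case: ifP => // cond _; rewrite /meets_diag.
  suff : (i + j + 1)%N != (p + q)%N by lia.
  apply/eqP => ep; have pq_gt0 : (0 < p + q)%N by lia.
  have i_lt_q : (i < q)%N by rewrite -(ltn_pmul2r pq_gt0); nia.
  have : (i.+1 * (p + q) <= q * (p + q))%N by rewrite leq_pmul2r.
  nia.
- rewrite crossingV //=; case: ifP => // cond _.
  suff : i != q by lia.
  apply/eqP => ei; subst i.
  have j_lt_p : (j < p)%N by rewrite -(ltn_pmul2r q_gt0); lia.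
  have : (j.+1 * q <= p * q)%N by rewrite leq_pmul2r.
  lia.
Qed.

Lemma crossing_Some e' r :
  crossing p q e' = Some r -> exists2 e, crossed p q e & e' = int_edge e.
Proof.
case: e' => [[k i] j] cr; have [] := crossing_Some_ge0 cr.
case: i cr => // i; case: j => // j cr _ _.
by exists (k, i, j) => //; exact: (@crossing_Some_crossed (k, i, j) _ cr).
Qed.

Lemma crossed_bounds e : crossed p q e -> (e.1.2 <= q)%N /\ (e.2 <= p)%N.
Proof.
case: e => [[[] i j]] /=.
- move=> /and4P[? ? ? ?]; split; last by lia.
  by rewrite -(leq_pmul2r p_gt0); nia.
- move=> /andP[/andP[? ?] ?].
  have pq_gt0 : (0 < p + q)%N by lia.
  by split; rewrite -(leq_pmul2r pq_gt0); nia.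
- move=> /and4P[? ? ? ?]; split; first by lia.
  by rewrite -(leq_pmul2r q_gt0); nia.
Qed.

Lemma candidate_int_edge e : crossed p q e -> int_edge e \in candidate_edges p q.
Proof.
move=> cr; have [] := crossed_bounds cr; case: e {cr} => [[k i j]] /= i_le j_le.
apply/flattenP; exists [seq (k, i', j') | i' <- int_range q, j' <- int_range p].
  by apply/mapP; exists k => //; case: k.
by rewrite allpairs_f //= mem_int_range //; lia.
Qed.

Lemma lattice_word_stair : lattice_word p q = stair_word p q.
Proof.
set W := staircase p q (p + q - 2) 0 0.
have W_lt : sorted (fun a b => crossing_time a < crossing_time b) W.
  by apply: sorted_staircase; [exact: meets_diag00 | lia].
have time_inj : {in W &, injective crossing_time} := lt_sorted_key_inj W_lt.
have crossed_W : {in W, forall e, crossed p q e}.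
  by move=> e; apply: (crossed_staircase p_gt0 q_gt0 co_pq (meets_diag00 p_gt0 q_gt0)); lia.
set S := [seq (crossing_time e, nedge_letter p q e) | e <- W].
have mem_crossings : crossings p q =i S.
  move=> x; rewrite crossingsE mem_pmap; apply/mapP/mapP => -[e' e'_in x_e'].
    have [e cr e'_e] := crossing_Some (esym x_e'); subst e'.
    rewrite crossing_int_edge // in x_e'; case: x_e' => ->.
    by exists e => //; exact: mem_staircase.
  exists (int_edge e'); last by rewrite x_e' crossing_int_edge ?crossed_W.
  exact/candidate_int_edge/crossed_W.
have uniq_crossings : uniq (crossings p q).
  rewrite crossingsE; apply: pmap_uniq_in (uniq_candidate_edges p q) _.
  move=> x y _ _ r fx fy.
  have [e1 cr1 ex] := crossing_Some fx; have [e2 cr2 ey] := crossing_Some fy; subst x y.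
  move: fx fy; rewrite !crossing_int_edge // => -[<-] [t21 _].
  by rewrite (time_inj e1 e2) ?mem_staircase.
have S_lt : sorted (fun a b => a.1 < b.1) S by rewrite sorted_map.
have uniq_S : uniq S by apply: sorted_uniq S_lt => [b a c|a]; [exact: lt_trans | exact: ltxx].
rewrite /lattice_word /stair_word -/W (@sort_le_fst_perm _ _ _ _ S) ?uniq_perm //.
by rewrite -map_comp.
Qed.
End LatticeStaircase.

(** * Descending the Farey tree *)

Lemma stair_word_word_vertex p q : 0 < p -> 0 < q -> coprime p q ->
  exists path : seq bool, let m := mid3 (farey_vertex path) in
    m.1 * q = m.2 * p /\ stair_word p q = mid3 (word_vertex path).
Proof.
have [n] := ubnP (p + q); elim: n p q => // n IHn p q /ltnSE pq_le p_gt0 q_gt0 co_pq.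
case: (ltngtP p q) => [p_lt_q|q_lt_p|p_eq_q].
- have [d q_eq] : exists d, q = p + d by exists (q - p); lia.
  subst q.
  have co_pd : coprime p d by move: co_pq; rewrite /coprime gcdnDl.
  have [path [m_eq w_eq]] := IHn p d ltac:(lia) p_gt0 ltac:(lia) co_pd.
  exists (false :: path); rewrite farey_vertexL word_vertexL !mid3_map3.
  split; last by rewrite -w_eq fhom_left_stair_word //; lia.
  by move: m_eq; rewrite /farey_left /=; lia.
- have [d p_eq] : exists d, p = d + q by exists (p - q); lia.
  subst p.
  have co_dq : coprime d q by move: co_pq; rewrite /coprime gcdnC gcdnDr gcdnC.
  have [path [m_eq w_eq]] := IHn d q ltac:(lia) ltac:(lia) q_gt0 co_dq.
  exists (true :: path); rewrite farey_vertexR word_vertexR !mid3_map3.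
  split; last by rewrite -w_eq fhom_right_stair_word //; lia.
  by move: m_eq; rewrite /farey_right /=; lia.
- by move: co_pq; rewrite -p_eq_q /coprime gcdnn => /eqP p1; subst; exists [::].
Qed.

Theorem corollary3p7 (p q : nat) :
  coprime p q ->
  reduced (omega p q) /\ Omega_rel p q (freduce (omega p q)).
Proof.
move=> co_pq; rewrite /omega.
have [q0|q_gt0] := posnP q.
  by subst q; move: co_pq; rewrite /coprime gcdn0 => /eqP ->; split => //; right; left.
have [p0|p_gt0] := posnP p.
  by subst p; move: co_pq; rewrite /coprime gcd0n => /eqP ->; split => //; left.
rewrite lattice_word_stair // (freduce_id (reduced_stair_word p q)).
split; first exact: reduced_stair_word.
by right; right; do 2!split => //; exact: stair_word_word_vertex.
Qed.
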